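(* Consider a single base station and $N=2$ users. At each slot $t=1,2,\ldots$, one of the two users is chosen uniformly at random, independently across slots, to have a \textsf{Good} channel, and the other has a \textsf{Bad} channel. At each slot the base station schedules exactly one user via an online policy $\pi$: the decision at slot $t$ is measurable with respect to the sigma-algebra generated by the ages and scheduling decisions up to slot $t-1$ (so it does not know the current channel states). The ages evolve as $h_i(t+1)=1$ if $\mathrm{UE}_i$ was scheduled at slot $t$ and its channel was \textsf{Good} at slot $t$, and $h_i(t+1)=h_i(t)+1$ otherwise. Let $H_{\mathrm{sum}}(t)=\mathbb{E}^\pi[h_1(t)]+\mathbb{E}^\pi[h_2(t)]$. Then for every online policy $\pi$, $\limsup_{T\to\infty}\frac{1}{T}\sum_{t=1}^{T}H_{\mathrm{sum}}(t)\ge 6$.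
   Context: Each scheduled transmission thus succeeds with probability $p_1=p_2=1/2$. The quantity bounded is the time-averaged expected sum of the two users' ages. *)

From mathcomp Require Import all_boot all_order all_algebra.
From mathcomp Require Import all_classical all_reals all_analysis.
Set Implicit Arguments. Unset Strict Implicit. Unset Printing Implicit Defensive.
Import Order.TTheory GRing.Theory Num.Theory.
Local Open Scope ring_scope.

(* Channel state of a slot: a boolean c; c = true means UE_1 is Good (UE_2 Bad),
   c = false means UE_2 is Good (UE_1 Bad).
   Scheduling decision of a slot: a boolean d; d = true means UE_1 is scheduled,
   d = false means UE_2 is scheduled. *)

Definition age_update (h : nat * nat) (d c : bool) : nat * nat :=
  (if d && c then 1%N else (h.1).+1,
   if ~~ d && ~~ c then 1%N else (h.2).+1).

(* History available when deciding at slot t: the list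
   [(h(1), d(1)); ...; (h(t-1), d(t-1))] of ages and decisions up to slot t-1. *)
Definition history := seq ((nat * nat) * bool).

Definition policy := history -> bool.

Fixpoint run (pi : policy) (hist : history) (h : nat * nat) (cs : seq bool)
  : nat * nat :=
  match cs with
  | [::] => h
  | c :: cs' =>
      let d := pi hist in
      run pi (rcons hist (h, d)) (age_update h d c) cs'
  end.

(* Ages at slot (size cs).+1, starting from ages h0 at slot 1, with channel
   states cs at slots 1, ..., size cs. *)
Definition ages_at (pi : policy) (h0 : nat * nat) (cs : seq bool) : nat * nat :=
  run pi [::] h0 cs.

(* H_sum(t) = E[h_1(t)] + E[h_2(t)] for t >= 1: the channel states at slots
   1..t-1 are i.i.d. uniform, so each of the 2^(t-1) realizations has
   probability 2^-(t-1). *)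
Definition Hsum {R : realType} (pi : policy) (h0 : nat * nat) (t : nat) : R :=
  (2 ^- t.-1) *
  \sum_(cs : (t.-1).-tuple bool)
     (((ages_at pi h0 cs).1 + (ages_at pi h0 cs).2)%N)%:R.

Definition avg_Hsum {R : realType} (pi : policy) (h0 : nat * nat) (T : nat) : R :=
  T%:R^-1 * \sum_(1 <= t < T.+1) Hsum pi h0 t.

(* Let F(h) = h_1 + h_2 and P(h) = 4 min(h_1, h_2) + 2 max(h_1, h_2).  Whichever
   user is scheduled, its channel is Good with probability 1/2, and a case check
   gives E[P(h(t+1)) | past] >= P(h(t)) + 6 - F(h(t)).  Summing this drift,
   sum_{t <= T} H_sum(t) >= 6T + P(h(1)) - E[P(h(T+1))] >= 6T - 3 H_sum(T+1),
   because P <= 3F.  If the averages stayed below some c < 6 from some point on,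
   this would force H_sum(T+1) >= (6 - c)T/3, so the partial sums would grow
   quadratically, contradicting their bound cT. *)
From mathcomp Require Import all_boot all_order all_algebra.
From mathcomp Require Import all_classical all_reals all_analysis.
From mathcomp Require Import zify ring lra.
Set Implicit Arguments. Unset Strict Implicit. Unset Printing Implicit Defensive.
Import Order.TTheory GRing.Theory Num.Theory.
Local Open Scope ring_scope.

Lemma sum_tupleS (T : finType) (V : nmodType) n (F : n.+1.-tuple T -> V) :
  \sum_(t : n.+1.-tuple T) F t = \sum_(x : T) \sum_(t : n.-tuple T) F [tuple of x :: t].
Proof.
rewrite pair_big /= (reindex (fun p : T * n.-tuple T => [tuple of p.1 :: p.2])) //.
exists (fun t : n.+1.-tuple T => (thead t, [tuple of behead t])).
  by move=> [x t] _; congr pair; apply: val_inj.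
by move=> t _; rewrite [in RHS](tuple_eta t).
Qed.

Section MeanGrowth.
Variables (R : archiRealFieldType) (u : nat -> R) (a b : R).
Hypothesis u_ge0 : forall t, 0 <= u t.
Hypothesis b_gt0 : 0 < b.
Hypothesis partial_sum_ge :
  forall T, a * T%:R - b * u T.+1 <= \sum_(1 <= t < T.+1) u t.

Let S T := \sum_(1 <= t < T.+1) u t.

Lemma mean_frequently_gt c n :
  c < a -> exists2 k, (n <= k)%N & c < k%:R^-1 * S k.
Proof.
move=> lt_ca; apply/not_exists2P => mean_le.
have S_ge T : a * T%:R - b * u T.+1 <= S T := partial_sum_ge T.
have S_le k : (n < k)%N -> S k <= c * k%:R.
  move=> lt_nk; have k_gt0 : (0 : R) < k%:R by rewrite ltr0n (leq_trans _ lt_nk).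
  have [/negP|/negP] := mean_le k; first by rewrite (ltnW lt_nk).
  by rewrite -leNgt ler_pdivrMl // mulrC.
have u_ge T : (n < T)%N -> (a - c) * T%:R / b <= u T.+1.
  by move=> lt_nT; rewrite ler_pdivrMr //; have := S_le T lt_nT; have := S_ge T; lra.
have quadratic N : (n < N)%N -> N%:R * ((a - c) * N%:R / b) <= S (N + N).
  move=> lt_nN; rewrite /S big_add1 (big_cat_nat (n := N)) ?leq_addr //=.
  rewrite -[X in X <= _]add0r; apply: lerD; first by apply: sumr_ge0.
  rewrite -[X in X%:R * _](addKn N N) mulr_natl -sumr_const_nat.
  apply: ler_sum_nat => T /andP[le_NT _]; apply: le_trans (u_ge T _); last lia.
  by rewrite ler_pM2r ?invr_gt0 // ler_wpM2l ?ler_nat //; lra.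
pose N := maxn n.+1 (Num.truncn (2 * b * c / (a - c))).+1.
have lt_nN : (n < N)%N by rewrite leq_max leqnn.
have N_gt0 : (0 : R) < N%:R by rewrite ltr0n (leq_trans _ lt_nN).
have N_big : 2 * b * c / (a - c) < N%:R.
  apply: lt_le_trans (truncnS_gt _) _; by rewrite ler_nat leq_max leqnn orbT.
have le_N : (a - c) * N%:R / b <= 2 * c.
  rewrite -(ler_pM2l N_gt0).
  have := le_trans (quadratic N lt_nN) (S_le _ (leq_trans lt_nN (leq_addr _ _))).
  by rewrite natrD; lra.
move: N_big le_N; rewrite ltr_pdivrMr ?subr_gt0 // ler_pdivrMr //; lra.
Qed.

End MeanGrowth.

Lemma limn_esup_ge (R : realType) (u : R^nat) (a : R) :
  (forall c n, c < a -> exists2 k, (n <= k)%N & c < u k) ->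
  (a%:E <= limn_esup (fun n => (u n)%:E))%E.
Proof.
move=> u_frequently_gt; rewrite limn_esup_lim; apply: lime_ge; first exact: is_cvg_esups.
apply: nearW => n; apply/lee_subgt0Pr => e e_gt0.
have lt_ea : a - e < a by rewrite gtrBl.
have [k le_nk lt_uk] := u_frequently_gt (a - e) n lt_ea.
apply: (@le_trans _ _ (u k)%:E); first by rewrite -EFinB lee_fin ltW.
by apply: ereal_sup_ubound; exists k.
Qed.

Section Expectation.
Variables (R : realFieldType) (pi : policy).

Definition expect n (f : nat * nat -> R) (hist : history) (h : nat * nat) : R :=
  2 ^- n * \sum_(cs : n.-tuple bool) f (run pi hist h cs).

Lemma expect0 f hist h : expect 0 f hist h = f h.
Proof.
rewrite /expect (eq_bigr (fun _ => f h)) => [|t _]; last by rewrite tuple0.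
by rewrite sumr_const card_tuple expr0 invr1 mul1r.
Qed.

Lemma expectS n f hist h :
  expect n.+1 f hist h =
  (expect n f (rcons hist (h, pi hist)) (age_update h (pi hist) true) +
   expect n f (rcons hist (h, pi hist)) (age_update h (pi hist) false)) / 2.
Proof. by rewrite /expect sum_tupleS big_bool /= exprSr invfM; field. Qed.

Lemma expect_le n f g hist h :
  (forall h, f h <= g h) -> expect n f hist h <= expect n g hist h.
Proof.
by move=> le_fg; rewrite ler_wpM2l ?invr_ge0 ?exprn_ge0 //; apply: ler_sum.
Qed.

Lemma expectZ n k f hist h :
  expect n (fun h => k * f h) hist h = k * expect n f hist h.
Proof. by rewrite /expect -mulr_sumr mulrCA. Qed.

Lemma expect_drift k f p :
  (forall h d,
     k + p h <= f h + (p (age_update h d true) + p (age_update h d false)) / 2) ->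
  forall n hist h, k + expect n p hist h <= expect n f hist h + expect n.+1 p hist h.
Proof.
move=> drift; elim=> [|n IHn] hist h; first by rewrite expectS !expect0.
rewrite expectS [expect n.+1 f _ _]expectS [expect n.+2 p _ _]expectS.
have := IHn (rcons hist (h, pi hist)) (age_update h (pi hist) true).
have := IHn (rcons hist (h, pi hist)) (age_update h (pi hist) false).
lra.
Qed.

End Expectation.

Definition age_sum (h : nat * nat) : nat := (h.1 + h.2)%N.

Definition age_potential (h : nat * nat) : nat :=
  (4 * minn h.1 h.2 + 2 * maxn h.1 h.2)%N.

Lemma age_potential_drift h d :
  (12 + 2 * age_potential h <=
   2 * age_sum h + age_potential (age_update h d true)
   + age_potential (age_update h d false))%N.
Proof. by case: h => h1 h2; case: d; rewrite /age_potential /age_sum /=; lia. Qed.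

Lemma age_potential_le h : (age_potential h <= 3 * age_sum h)%N.
Proof. by rewrite /age_potential /age_sum; lia. Qed.

Section AverageAge.
Variables (R : realType) (pi : policy) (h0 : nat * nat).

Lemma Hsum_ge0 t : 0 <= Hsum (R := R) pi h0 t.
Proof.
by rewrite mulr_ge0 ?invr_ge0 ?exprn_ge0 //; apply: sumr_ge0 => cs _; apply: ler0n.
Qed.

Lemma partial_Hsum_ge T :
  6 * T%:R - 3 * Hsum pi h0 T.+1 <= \sum_(1 <= t < T.+1) Hsum (R := R) pi h0 t.
Proof.
pose F h : R := (age_sum h)%:R; pose P h : R := (age_potential h)%:R.
have Hsum_expect t : Hsum pi h0 t.+1 = expect pi t F [::] h0 by [].
have drift n :
    6 + expect pi n P [::] h0 <= expect pi n F [::] h0 + expect pi n.+1 P [::] h0.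
  apply: expect_drift => h d; move: (age_potential_drift h d); rewrite /F /P.
  move: (age_potential (age_update h d true)) (age_potential (age_update h d false)).
  move: (age_potential h) (age_sum h) => p s pt pf.
  by rewrite -(ler_nat R) !natrD; lra.
have telescope :
    6 * T%:R + P h0 <= \sum_(1 <= t < T.+1) Hsum pi h0 t + expect pi T P [::] h0.
  elim: T => [|T IHT]; first by rewrite big_geq // expect0 mulr0 !add0r.
  by rewrite big_nat_recr //= Hsum_expect -addn1 natrD; have := drift T; lra.
have P_le : expect pi T P [::] h0 <= 3 * Hsum pi h0 T.+1.
  rewrite Hsum_expect -expectZ; apply: expect_le => h.
  by rewrite /P /F -natrM ler_nat age_potential_le.
have P_ge0 : 0 <= P h0 by apply: ler0n.
lra.
Qed.

End AverageAge.

Local Open Scope ereal_scope.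

Theorem proposition1 (R : realType) (pi : policy) (h0 : nat * nat) :
  (6%:R : R)%:E <= limn_esup (fun T : nat => (avg_Hsum (R := R) pi h0 T)%:E).
Proof.
apply: limn_esup_ge => c n lt_c6.
by apply: (mean_frequently_gt (@Hsum_ge0 R pi h0) _ (@partial_Hsum_ge R pi h0)).
Qed.
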